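(* Let $\mathcal{U}$ be a subspace of $\mathbb{R}^n$ with $\mu(\mathcal{U})<1/2$. Then there exists $\lambda\in\mathbb{R}^n$ with $\lambda\ge 0$ entrywise such that $\operatorname{diag}\big(P_{\mathcal{U}^\perp}\operatorname{diag}^*(\lambda)P_{\mathcal{U}^\perp}\big)=\mathbf{1}$.
   Context: $P_{\mathcal{W}}$ is the orthogonal projector onto a subspace $\mathcal{W}$; $\mu(\mathcal{U})=\max_i\|P_{\mathcal{U}}e_i\|_2^2$ is the coherence. $\operatorname{diag}(X)\in\mathbb{R}^n$ is the diagonal of an $n\times n$ matrix $X$, $\operatorname{diag}^*(\lambda)$ is the diagonal matrix with diagonal $\lambda$, and $\mathbf{1}$ is the all-ones vector. *)

(* Subspaces of R^n are represented as row spaces of n x n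
   matrices (mxalgebra). *)
From HB Require Import structures.
From mathcomp Require Import all_boot all_order all_algebra.
Set Implicit Arguments. Unset Strict Implicit. Unset Printing Implicit Defensive.
Import Order.TTheory GRing.Theory Num.Theory.
Local Open Scope ring_scope.

Definition is_orth_proj (R : realFieldType) (n : nat) (P U : 'M[R]_n) : Prop :=
  P^T = P /\ P *m P = P /\ (P == U)%MS.

Definition orth_compl (R : realFieldType) (n : nat) (U : 'M[R]_n) : 'M[R]_n :=
  kermx U^T.

(* Coherence mu(U) = max_i ||P_U e_i||_2^2, with P the projector onto U. *)
Definition coherence (R : realFieldType) (n : nat) (P : 'M[R]_n) : R :=
  \big[Num.max/0]_(i < n) \sum_(j < n) (P j i) ^+ 2.

Definition diagv (R : realFieldType) (n : nat) (X : 'M[R]_n) : 'rV[R]_n :=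
  \row_i X i i.

(** The complementary projector [Q = P_{U^perp} = 1 - P_U] has diagonal
    entries [d_i = 1 - P_ii > 1/2], and [Q = Q^T = Q^2] gives
    [d_i = sum_j Q_ij^2].  Hence the matrix [M_ij = Q_ij^2] has diagonal
    [d_i^2] and off-diagonal row sums [d_i - d_i^2 <= 1/4 < d_i^2]: it is
    strictly diagonally dominant, so [M lambda = 1] has a unique solution,
    and a min/max argument on the rows shows that this solution is
    nonnegative.  Finally [diag (Q diag(lambda) Q) = M lambda]. *)

From HB Require Import structures.
From mathcomp Require Import all_boot all_order all_algebra.
From mathcomp Require Import lra.
Set Implicit Arguments. Unset Strict Implicit. Unset Printing Implicit Defensive.
Import Order.TTheory GRing.Theory Num.Theory.
Local Open Scope ring_scope.

Section DiagonallyDominant.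
Variables (R : realFieldType) (n : nat).
Implicit Types (M : 'M[R]_n).

Lemma sum_weighted_le (I : finType) (P : {pred I}) (a x : I -> R) (c : R) :
  (forall j, 0 <= a j) -> (forall j, x j <= c) ->
  \sum_(j | P j) a j * x j <= (\sum_(j | P j) a j) * c.
Proof.
move=> a_ge0 x_le; rewrite mulr_suml; apply: ler_sum => j _.
exact: ler_wpM2l.
Qed.

Lemma sum_weighted_ge (I : finType) (P : {pred I}) (a x : I -> R) (c : R) :
  (forall j, 0 <= a j) -> (forall j, c <= x j) ->
  (\sum_(j | P j) a j) * c <= \sum_(j | P j) a j * x j.
Proof.
move=> a_ge0 x_ge; rewrite mulr_suml; apply: ler_sum => j _.
exact: ler_wpM2l.
Qed.

Lemma diag_dominant_unitmx M :
  (forall i, \sum_(j | j != i) `|M i j| < `|M i i|) -> M \in unitmx.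
Proof.
move=> dom; rewrite unitmxE unitfE -det_tr; apply/det0P => -[v v_neq0 vM0].
have [j0 vj0_neq0] : exists j, v 0 j != 0.
  apply/existsP; apply: contraR v_neq0 => /existsPn v0.
  by apply/eqP/matrixP => a b; rewrite ord1 mxE; apply/eqP/negbNE.
pose i := [arg max_(i > j0) `|v 0 i|]%O.
have v_le : forall j, `|v 0 j| <= `|v 0 i|.
  rewrite /i; case: (@arg_maxP _ _ _ j0 xpredT (fun j => `|v 0 j|) isT) => //.
  by move=> ? _ le_max j; apply: le_max.
have vi_gt0 : 0 < `|v 0 i| by apply: lt_le_trans (v_le j0); rewrite normr_gt0.
have row_i : M i i * v 0 i = - \sum_(j | j != i) M i j * v 0 j.
  apply/eqP; rewrite -addr_eq0.
  move/matrixP/(_ 0 i): vM0; rewrite !mxE (bigD1 i) //= => vM0i.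
  rewrite -[X in _ == X]vM0i mxE mulrC; apply/eqP; congr (_ + _).
  by apply: eq_bigr => j _; rewrite mxE mulrC.
have : `|M i i| * `|v 0 i| <= (\sum_(j | j != i) `|M i j|) * `|v 0 i|.
  rewrite -normrM row_i normrN; apply: le_trans (ler_norm_sum _ _ _) _.
  under eq_bigr do rewrite normrM.
  exact: sum_weighted_le.
by rewrite ler_pM2r // leNgt dom.
Qed.

Section NonnegSolution.
Variable M : 'M[R]_n.
Hypothesis M_ge0 : forall i j, 0 <= M i j.
Hypothesis M_dom : forall i, \sum_(j | j != i) M i j < M i i.
Hypothesis M_offdiag_le_diag : forall i k, \sum_(j | j != k) M k j <= M i i.

(** Compare the row [k] of the least entry [m = x_k < 0] with the row [t]
    of the largest entry [q = x_t]: with [a], [r] the diagonal entries and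
    off-diagonal sums,
    [1 <= a_k m + r_k q] and [a_t q + r_t m <= 1] force
    [a_t - r_k <= m (a_t a_k - r_k r_t) < 0]. *)
Lemma diag_dominant_solution_ge0 (x : 'cV[R]_n) :
  M *m x = const_mx 1 -> forall i, 0 <= x i 0.
Proof.
move=> Mx1 i0; rewrite leNgt; apply/negP => xi0_lt0.
have row j : \sum_k M j k * x k 0 = 1.
  by have := congr1 (fun A : 'cV_n => A j 0) Mx1; rewrite !mxE.
pose k := [arg min_(k < i0) x k 0]%O.
pose t := [arg max_(t > i0) x t 0]%O.
have x_ge : forall j, x k 0 <= x j 0.
  rewrite /k; case: (@arg_minP _ _ _ i0 xpredT (fun j => x j 0) isT) => //.
  by move=> ? _ ge_min j; apply: ge_min.
have x_le : forall j, x j 0 <= x t 0.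
  rewrite /t; case: (@arg_maxP _ _ _ i0 xpredT (fun j => x j 0) isT) => //.
  by move=> ? _ le_max j; apply: le_max.
have m_lt0 : x k 0 < 0 by apply: le_lt_trans (x_ge i0) xi0_lt0.
have row_k := row k; rewrite (bigD1 k) //= in row_k.
have row_t := row t; rewrite (bigD1 t) //= in row_t.
have le_k := sum_weighted_le (fun j => j != k) (M_ge0 k) x_le.
have ge_t := sum_weighted_ge (fun j => j != t) (M_ge0 t) x_ge.
have rk_lt := M_dom k; have rt_lt := M_dom t.
set rk := \sum_(j | j != k) M k j in le_k rk_lt.
set rt := \sum_(j | j != t) M t j in ge_t rt_lt.
have rk_ge0 : 0 <= rk by apply: sumr_ge0.
have rt_ge0 : 0 <= rt by apply: sumr_ge0.
have rk_le : rk <= M t t := M_offdiag_le_diag t k.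
have rr_lt_aa : rk * rt < M k k * M t t by apply: ltr_pM.
have low_k : 1 - M k k * x k 0 <= rk * x t 0 by lra.
have up_t : M t t * x t 0 <= 1 - rt * x k 0 by lra.
have : M t t * (1 - M k k * x k 0) <= rk * (1 - rt * x k 0).
  apply: le_trans (ler_wpM2l (le_trans rk_ge0 rk_le) low_k) _.
  by rewrite mulrCA; apply: ler_wpM2l.
nra.
Qed.

Lemma diag_dominant_nonneg_solution :
  exists2 x : 'cV[R]_n, forall i, 0 <= x i 0 & M *m x = const_mx 1.
Proof.
have M_unit : M \in unitmx.
  apply: diag_dominant_unitmx => i; rewrite ger0_norm //.
  by under eq_bigr do rewrite ger0_norm //.
exists (invmx M *m const_mx 1); last by rewrite mulmxA mulmxV // mul1mx.
by apply: diag_dominant_solution_ge0; rewrite mulmxA mulmxV // mul1mx.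
Qed.

End NonnegSolution.
End DiagonallyDominant.

Section OrthProj.
Variables (R : realFieldType) (n : nat).
Implicit Types (P Q U : 'M[R]_n).

Lemma mulmx_tr_eq0 (m p : nat) (A : 'M[R]_(m, p)) : A *m A^T = 0 -> A = 0.
Proof.
move=> AAT0; apply/matrixP => i j; rewrite mxE.
have sq0 : \sum_k A i k ^+ 2 = 0.
  move/matrixP/(_ i i): AAT0; rewrite !mxE => AAT0.
  by rewrite -[RHS]AAT0; apply: eq_bigr => k _; rewrite mxE expr2.
by apply/eqP; rewrite -sqrf_eq0; apply/eqP/(psumr_eq0P _ sq0) => // k _; apply: sqr_ge0.
Qed.

Lemma orth_proj_sym P U : is_orth_proj P U -> forall i j, P i j = P j i.
Proof. by case=> PT _ i j; rewrite -{1}PT mxE. Qed.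

Lemma orth_proj_diag P U : is_orth_proj P U -> forall i, P i i = \sum_j P i j ^+ 2.
Proof.
move=> PU i; have [_ [PP _]] := PU.
rewrite -{1}PP mxE; apply: eq_bigr => j _.
by rewrite (orth_proj_sym PU j i) expr2.
Qed.

(** [1 - P - Q] vanishes on [U] and on [U^perp], and is symmetric, so
    [(1 - P - Q) (1 - P - Q)^T = 0]. *)
Lemma orth_proj_compl P Q U :
  is_orth_proj P U -> is_orth_proj Q (orth_compl U) -> P + Q = 1%:M.
Proof.
move=> [PT [PP /andP [sPU sUP]]] [QT [QQ /andP [sQK sKQ]]].
have QU0 : Q *m U^T = 0 by apply/sub_kermxP.
have QP0 : Q *m P = 0.
  by have [X PX] := submxP sPU; rewrite -PT PX trmx_mul mulmxA QU0 mul0mx.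
have PQ0 : P *m Q = 0 by rewrite -PT -QT -trmx_mul QP0 trmx0.
pose S := 1%:M - P - Q.
have SP0 : S *m P = 0 by rewrite !mulmxBl mul1mx PP QP0 subr0 subrr.
have SQ0 : S *m Q = 0 by rewrite !mulmxBl mul1mx PQ0 QQ subr0 subrr.
have SU0 : S *m U^T = 0.
  by have [Y ->] := submxP sUP; rewrite trmx_mul PT mulmxA SP0 mul0mx.
have [Z SZ] : exists Z, S = Z *m Q.
  by apply/submxP; apply: submx_trans sKQ; apply/sub_kermxP.
have : S *m S^T = 0 by rewrite [S in S^T]SZ trmx_mul QT mulmxA SQ0 mul0mx.
by move/mulmx_tr_eq0/eqP; rewrite subr_eq0 subr_eq eq_sym addrC => /eqP.
Qed.

Lemma coherence_diag_le P U : is_orth_proj P U -> forall i, P i i <= coherence P.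
Proof.
move=> PU i; rewrite (orth_proj_diag PU) /coherence.
under eq_bigr do rewrite (orth_proj_sym PU).
exact: (le_bigmax 0 (fun i => \sum_j P j i ^+ 2) i).
Qed.

End OrthProj.

Theorem lemmaA1 (R : realFieldType) (n : nat) (U PU PUp : 'M[R]_n) :
  is_orth_proj PU U ->
  is_orth_proj PUp (orth_compl U) ->
  coherence PU < 1 / 2 ->
  exists lambda : 'rV[R]_n,
    (forall i, 0 <= lambda 0 i) /\
    diagv (PUp *m diag_mx lambda *m PUp) = const_mx 1.
Proof.
move=> hPU hPUp coh_lt.
set Q := PUp in hPUp *.
have Q_gt : forall i, 1 / 2 < Q i i.
  move=> i; have := congr1 (fun A : 'M_n => A i i) (orth_proj_compl hPU hPUp).
  rewrite !mxE eqxx /= => PQ1.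
  have := le_lt_trans (coherence_diag_le hPU i) coh_lt; lra.
pose M : 'M[R]_n := \matrix_(i, j) Q i j ^+ 2.
have offdiag i : \sum_(j | j != i) M i j = Q i i - Q i i ^+ 2.
  have := orth_proj_diag hPUp i; rewrite (bigD1 i) //= => dQ.
  rewrite {1}dQ addrAC subrr add0r; apply: eq_bigr => j _; exact: mxE.
have [x x_ge0 Mx1] : exists2 x : 'cV[R]_n, forall i, 0 <= x i 0 & M *m x = const_mx 1.
  apply: diag_dominant_nonneg_solution.
  - by move=> i j; rewrite mxE sqr_ge0.
  - move=> i; rewrite offdiag mxE; have := Q_gt i; nra.
  - move=> i k; rewrite offdiag mxE; have := Q_gt i; have := Q_gt k; nra.
exists x^T; split=> [i|]; first by rewrite mxE.
apply/matrixP => a i; rewrite ord1 !mxE.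
have := congr1 (fun A : 'cV_n => A i 0) Mx1; rewrite !mxE => <-.
apply: eq_bigr => j _; rewrite mul_mx_diag !mxE (orth_proj_sym hPUp j i) expr2.
by rewrite mulrAC.
Qed.
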